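(* Let $\ket\psi$ be a pure $n$-qubit state, and let $p_1$ be the output distribution of the $1$-copy hidden cut circuit on $\ket\psi$. Let $H=\{\bm s\in\{0,1\}^n : P(\bm s)=1\}$. Then: (i) $H$ is a subgroup of $(\{0,1\}^n,\oplus)$ containing $\bm 0$ and $\bm 1$; (ii) for $\bm s\in\{0,1\}^n$ the following are equivalent: (a) $\bm s\in H$; (b) $P(\bm s'\oplus\bm s)=P(\bm s')$ for all $\bm s'\in\{0,1\}^n$; (c) $\bm s\cdot\bm x=0$ for every $\bm x$ with $p_1(\bm x)>0$.
   Context: Subsystems are bitstrings $\bm s\in\{0,1\}^n$ (qubit $j$ included iff $s_j=1$), $\bm 0,\bm 1$ are the all-zeros and all-ones strings, $\oplus$ is bitwise addition mod 2 and $\bm x\cdot\bm s$ the dot product mod 2. $\rho_{\bm s}=\mathrm{Tr}_{\bar{\bm s}}\ket\psi\bra\psi$ and $P(\bm s)=\mathrm{Tr}(\rho_{\bm s}^2)$ (with $P(\bm 0)=1$). $\mathrm{SWAP}_{\bm s}$ swaps the qubits of subsystem $\bm s$ between two copies of the $n$-qubit space. The $t$-copy hidden cut circuit: an $n$-qubit group register is initialized to $\ket{0^n}$ and a state register to $(\ket\psi\ket\psi)^{\otimes t}$; apply $H^{\otimes n}$ to the group register; apply $\sum_{\bm s}\ket{\bm s}\bra{\bm s}\otimes \mathrm{SWAP}_{\bm s}^{\otimes t}$; apply $H^{\otimes n}$ to the group register; measure the group register in the computational basis; $p_t$ denotes the resulting distribution. *)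

From HB Require Import structures.
From mathcomp Require Import all_boot all_order all_algebra.
Set Implicit Arguments. Unset Strict Implicit. Unset Printing Implicit Defensive.
Import Order.TTheory GRing.Theory Num.Theory.
Local Open Scope ring_scope.

(* bitstrings s in {0,1}^n ; qubit j is in s iff s j = true *)
Definition bits (n : nat) := {ffun 'I_n -> bool}.

Definition bzero n : bits n := [ffun _ => false].
Definition bone n : bits n := [ffun _ => true].
Definition bxor n (s t : bits n) : bits n := [ffun j => s j (+) t j].
Definition bcomp n (s : bits n) : bits n := [ffun j => ~~ s j].
Definition bdot n (x s : bits n) : bool := \big[addb/false]_(j < n) (x j && s j).

(* x is supported inside subsystem s (encodes a basis state of subsystem s) *)
Definition supp_in n (s x : bits n) : bool := [forall j, x j ==> s j].

Section Quantum.
Variable C : numClosedFieldType.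
Variable n : nat.

Definition is_pure_state (psi : {ffun bits n -> C}) : Prop :=
  \sum_(x : bits n) `|psi x| ^+ 2 = 1.

(* reduced density matrix rho_s = Tr_{comp s} |psi><psi|, indexed by basis
   states a, a' of subsystem s (bitstrings supported in s); a basis state of
   the whole system is a (+) b with b supported in the complement. *)
Definition rho (psi : {ffun bits n -> C}) (s a a' : bits n) : C :=
  \sum_(b : bits n | supp_in (bcomp s) b) psi (bxor a b) * (psi (bxor a' b))^*.

Definition purity (psi : {ffun bits n -> C}) (s : bits n) : C :=
  \sum_(a : bits n | supp_in s a) \sum_(a' : bits n | supp_in s a')
     rho psi s a a' * rho psi s a' a.

(* states of (group register) x (copy 1) x (copy 2) *)
Definition gstate := bits n -> bits n -> bits n -> C.

Definition init_state (psi : {ffun bits n -> C}) : gstate :=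
  fun g u v => (g == bzero n)%:R * psi u * psi v.

Definition hadamard_n (f : gstate) : gstate :=
  fun g u v => (sqrtC (2 ^ n)%:R)^-1 *
     \sum_(h : bits n) (-1) ^+ bdot g h * f h u v.

Definition swap_sub (s u v : bits n) : bits n * bits n :=
  ([ffun j => if s j then v j else u j], [ffun j => if s j then u j else v j]).

Definition ctrl_swap (f : gstate) : gstate :=
  fun g u v => f g (swap_sub g u v).1 (swap_sub g u v).2.

Definition hc_final (psi : {ffun bits n -> C}) : gstate :=
  hadamard_n (ctrl_swap (hadamard_n (init_state psi))).

Definition p1 (psi : {ffun bits n -> C}) (x : bits n) : C :=
  \sum_(u : bits n) \sum_(v : bits n) `|hc_final psi x u v| ^+ 2.

Definition Hgroup (psi : {ffun bits n -> C}) : {set bits n} :=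
  [set s | purity psi s == 1].

End Quantum.

(* The purity is the Walsh-Hadamard transform of the output distribution:
   P(s) = \sum_x (-1)^(s.x) p_1(x).  Indeed the two Hadamard layers turn the
   squared amplitudes of the circuit into the autocorrelation over the group
   register of the controlled-swap amplitudes, and the shift by s in that
   autocorrelation is exactly the swap test of subsystem s.  Since p_1 is a
   probability distribution (P(0) = 1), P(s) = 1 iff every x in the support
   of p_1 is orthogonal to s; the three characterizations of H and the
   subgroup property follow from this. *)
From HB Require Import structures.
From mathcomp Require Import all_boot all_order all_algebra.
From mathcomp Require Import ring.
Set Implicit Arguments. Unset Strict Implicit. Unset Printing Implicit Defensive.
Import Order.TTheory GRing.Theory Num.Theory.
Local Open Scope ring_scope.

Section Bitstrings.
Variable n : nat.
Implicit Types s t x y g u v : bits n.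

Lemma bdot_xorl x y t : bdot (bxor x y) t = bdot x t (+) bdot y t.
Proof.
rewrite /bdot -big_split /=; apply: eq_bigr => j _; rewrite ffunE.
by case: (x j) (y j) (t j) => [] [] [].
Qed.

Lemma bdotC x t : bdot x t = bdot t x.
Proof. by apply: eq_bigr => j _; rewrite andbC. Qed.

Lemma bdot_xorr x y t : bdot t (bxor x y) = bdot t x (+) bdot t y.
Proof. by rewrite bdotC bdot_xorl !(bdotC _ t). Qed.

Lemma bdot0r x : bdot x (bzero n) = false.
Proof. by rewrite /bdot big1 // => j _; rewrite ffunE andbF. Qed.

Lemma bxor0l s : bxor (bzero n) s = s.
Proof. by apply/ffunP => j; rewrite !ffunE. Qed.

Lemma bxorK s : involutive (bxor s).
Proof. by move=> t; apply/ffunP => j; rewrite !ffunE addbA addbb. Qed.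

Lemma card_bits : #|{: bits n}| = (2 ^ n)%N.
Proof. by rewrite card_ffun card_bool card_ord. Qed.

Lemma swap_subK g u v :
  swap_sub g (swap_sub g u v).1 (swap_sub g u v).2 = (u, v).
Proof. by congr pair; apply/ffunP => j; rewrite !ffunE; case: (g j). Qed.

Lemma swap_sub_xor s g u v :
  swap_sub (bxor s g) (swap_sub g u v).1 (swap_sub g u v).2 = swap_sub s u v.
Proof.
by congr pair; apply/ffunP => j; rewrite !ffunE; case: (g j) (s j) => [] [].
Qed.

Lemma swap_sub0 u v : swap_sub (bzero n) u v = (u, v).
Proof. by congr pair; apply/ffunP => j; rewrite !ffunE. Qed.

Lemma swap_sub1 u v : swap_sub (bone n) u v = (v, u).
Proof. by congr pair; apply/ffunP => j; rewrite !ffunE. Qed.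

End Bitstrings.

Section Walsh.
Variables (C : numClosedFieldType) (n : nat).
Implicit Types (s t x : bits n) (p : bits n -> C).

Definition walsh p s : C := \sum_x (-1) ^+ bdot s x * p x.

Lemma sum_sign t :
  \sum_(x : bits n) (-1) ^+ bdot x t = if t == bzero n then (2 ^ n)%:R else 0 :> C.
Proof.
case: eqP => [->|/eqP nz].
  by under eq_bigr do rewrite bdot0r expr0; rewrite sumr_const card_bits.
have [j tj] : exists j, t j.
  apply/existsP; apply: contraR nz => /existsPn t0.
  by apply/eqP/ffunP => j; rewrite ffunE; apply/negbTE/t0.
pose e : bits n := [ffun k => k == j].
have e_t : bdot e t = true.
  rewrite /bdot (bigD1 j) //= big1 ?ffunE ?eqxx ?tj // => k /negbTE kj.
  by rewrite ffunE kj.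
(* translating by e flips every sign, so the sum is its own opposite *)
set S := (\sum_x _); have : S = - S.
  rewrite {1}/S (reindex_inj (can_inj (bxorK e))) /= -sumrN.
  by apply: eq_bigr => x _; rewrite bdot_xorl e_t signr_addb expr1 mulN1r.
by move/eqP; rewrite -subr_eq0 opprK -mulr2n mulrn_eq0 => /eqP.
Qed.

Lemma walsh0 p : walsh p (bzero n) = \sum_x p x.
Proof. by apply: eq_bigr => x _; rewrite bdotC bdot0r mul1r. Qed.

Section Nonnegative.
Variable p : bits n -> C.
Hypothesis p_ge0 : forall x, 0 <= p x.

Lemma walsh_eq_sumP s :
  walsh p s = \sum_x p x <-> (forall x, 0 < p x -> bdot s x = false).
Proof.
have sum_gap : \sum_x p x - walsh p s = \sum_x (p x - (-1) ^+ bdot s x * p x).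
  by rewrite sumrB.
have gap_ge0 x : 0 <= p x - (-1) ^+ bdot s x * p x.
  case: (bdot s x); last by rewrite mul1r subrr.
  by rewrite expr1 mulN1r opprK addr_ge0.
split=> [walsh_s x px | orth].
  apply/negbTE/negP => sx.
  have /psumr_eq0P gap0 : \sum_x (p x - (-1) ^+ bdot s x * p x) = 0.
    by rewrite -sum_gap walsh_s subrr.
  move: (gap0 (fun x _ => gap_ge0 x) x isT).
  by rewrite sx expr1 mulN1r opprK => /eqP; rewrite gt_eqF // addr_gt0.
apply/eqP; rewrite eq_sym -subr_eq0 sum_gap; apply/eqP/big1 => x _.
have [<-|px] := eqVneq 0 (p x); first by rewrite mulr0 subrr.
by rewrite orth ?mul1r ?subrr // lt_def eq_sym px p_ge0.
Qed.

Lemma walsh_xor_orth s s' :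
  (forall x, 0 < p x -> bdot s x = false) -> walsh p (bxor s' s) = walsh p s'.
Proof.
move=> orth; apply: eq_bigr => x _; rewrite bdot_xorl signr_addb.
have [<-|px] := eqVneq 0 (p x); first by rewrite !mulr0.
by rewrite orth ?mulr1 // lt_def eq_sym px p_ge0.
Qed.

End Nonnegative.

Lemma walsh_hadamard_sqr (B : bits n -> bits n -> bits n -> C) s :
  walsh (fun x => \sum_u \sum_v (\sum_g (-1) ^+ bdot x g * B g u v) *
                                (\sum_g (-1) ^+ bdot x g * B g u v)^*) s
  = (2 ^ n)%:R * \sum_u \sum_v \sum_g B g u v * (B (bxor s g) u v)^*.
Proof.
transitivity (\sum_u \sum_v \sum_g \sum_g'
   (\sum_x (-1) ^+ bdot x (bxor s (bxor g g'))) * (B g u v * (B g' u v)^*)).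
  transitivity (\sum_x \sum_u \sum_v \sum_g \sum_g'
     (-1) ^+ bdot x (bxor s (bxor g g')) * (B g u v * (B g' u v)^*)).
    apply: eq_bigr => x _; rewrite mulr_sumr; apply: eq_bigr => u _.
    rewrite mulr_sumr; apply: eq_bigr => v _.
    rewrite rmorph_sum mulr_suml mulr_sumr; apply: eq_bigr => g _.
    rewrite !mulr_sumr; apply: eq_bigr => g' _.
    rewrite !bdot_xorr !signr_addb rmorphM rmorph_sign bdotC; ring.
  rewrite exchange_big; apply: eq_bigr => u _.
  rewrite exchange_big; apply: eq_bigr => v _.
  rewrite exchange_big; apply: eq_bigr => g _.
  by rewrite exchange_big; apply: eq_bigr => g' _; rewrite mulr_suml.
rewrite mulr_sumr; apply: eq_bigr => u _; rewrite mulr_sumr; apply: eq_bigr => v _.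
rewrite mulr_sumr; apply: eq_bigr => g _.
(* only g' = s + g survives the character sum *)
rewrite (bigD1 (bxor s g)) //= [X in _ + X]big1 ?addr0.
  have -> : bxor s (bxor g (bxor s g)) = bzero n.
    by apply/ffunP => j; rewrite !ffunE; case: (s j) (g j) => [] [].
  by rewrite sum_sign eqxx.
move=> g' /eqP g'_neq; rewrite sum_sign; case: eqP => [shift0|]; last by rewrite mul0r.
case: g'_neq; apply/ffunP => j; have := congr1 (fun f : bits n => f j) shift0.
by rewrite !ffunE; case: (s j) (g j) (g' j) => [] [] [].
Qed.

End Walsh.

Section Purity.
Variables (C : numClosedFieldType) (n : nat) (psi : {ffun bits n -> C}).

Definition swap_amp (g u v : bits n) : C :=
  psi (swap_sub g u v).1 * psi (swap_sub g u v).2.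

(* <psi|<psi| SWAP_s |psi>|psi>, the swap-test expression of Tr(rho_s^2) *)
Definition swap_overlap (s : bits n) : C :=
  \sum_u \sum_v swap_amp (bzero n) u v * (swap_amp s u v)^*.

Definition proj_bits (s u : bits n) : bits n := [ffun j => u j && s j].

Lemma sum_split_subsystem (s : bits n) (F : bits n -> C) :
  \sum_u F u = \sum_(a | supp_in s a) \sum_(b | supp_in (bcomp s) b) F (bxor a b).
Proof.
rewrite (partition_big (proj_bits s) (supp_in s)) /=; last first.
  by move=> u _; apply/forallP => j; rewrite ffunE; case: (u j) (s j) => [] [].
apply: eq_bigr => a s_a; rewrite (reindex_inj (can_inj (bxorK a))) /=.
apply: eq_bigl => b; apply/eqP/forallP => [ab j | b_out].
  move: (congr1 (fun f : bits n => f j) ab) (forallP s_a j); rewrite !ffunE.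
  by case: (a j) (b j) (s j) => [] [] [].
apply/ffunP => j; move: (forallP s_a j) (b_out j); rewrite !ffunE.
by case: (a j) (b j) (s j) => [] [] [].
Qed.

Lemma swap_overlapE s : swap_overlap s = purity psi s.
Proof.
rewrite /swap_overlap /purity /rho (sum_split_subsystem s).
apply: eq_bigr => a s_a; under eq_bigr => b _ do rewrite (sum_split_subsystem s).
rewrite exchange_big /=; apply: eq_bigr => a' s_a'.
rewrite mulr_suml; apply: eq_bigr => b sc_b; rewrite mulr_sumr; apply: eq_bigr => b' sc_b'.
have swapE : swap_sub s (bxor a b) (bxor a' b') = (bxor a' b, bxor a b').
  congr pair; apply/ffunP => j;
  move: (forallP s_a j) (forallP s_a' j) (forallP sc_b j) (forallP sc_b' j);
  rewrite !ffunE; by case: (a j) (b j) (a' j) (b' j) (s j) => [] [] [] [] [].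
by rewrite /swap_amp swap_sub0 swapE /= rmorphM; ring.
Qed.

Lemma swap_autocorr s :
  \sum_u \sum_v \sum_g swap_amp g u v * (swap_amp (bxor s g) u v)^*
  = (2 ^ n)%:R * swap_overlap s.
Proof.
have -> : (2 ^ n)%:R * swap_overlap s = \sum_(g : bits n) swap_overlap s.
  by rewrite sumr_const card_bits mulr_natl.
rewrite pair_big /= exchange_big; apply: eq_bigr => g _.
rewrite /swap_overlap pair_big /=.
pose sw (p : bits n * bits n) := swap_sub g p.1 p.2.
have swK : cancel sw sw by move=> [u v]; rewrite /sw swap_subK.
rewrite (reindex_inj (can_inj swK)) /=; apply: eq_bigr => [[u v]] _.
by rewrite /sw /swap_amp swap_sub_xor swap_subK swap_sub0.
Qed.

Let N : C := (2 ^ n)%:R.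

Lemma N_neq0 : N != 0.
Proof. by rewrite pnatr_eq0 expn_eq0. Qed.

Lemma hc_finalE x u v :
  hc_final psi x u v = N^-1 * \sum_g (-1) ^+ bdot x g * swap_amp g u v.
Proof.
have -> : N^-1 = (sqrtC N)^-1 * (sqrtC N)^-1 by rewrite -invfM -expr2 sqrtCK.
rewrite /hc_final /hadamard_n -mulrA; congr (_ * _).
rewrite mulr_sumr; apply: eq_bigr => h _; rewrite /ctrl_swap mulrCA; congr (_ * _).
rewrite (bigD1 (bzero n)) //= [X in _ + X]big1 ?addr0.
  by rewrite /init_state eqxx bdot0r expr0 !mul1r.
by move=> k /negbTE k0; rewrite /init_state k0 !(mul0r, mulr0).
Qed.

Lemma p1_ge0 x : 0 <= p1 psi x.
Proof. by apply: sumr_ge0 => u _; apply: sumr_ge0 => v _; rewrite exprn_ge0. Qed.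

Lemma purity_walsh s : purity psi s = walsh (p1 psi) s.
Proof.
have N_conj : (N^-1)^* = N^-1 by rewrite geC0_conj // invr_ge0 ler0n.
have -> : walsh (p1 psi) s = N^-1 * N^-1 *
    walsh (fun x => \sum_u \sum_v (\sum_g (-1) ^+ bdot x g * swap_amp g u v) *
                                  (\sum_g (-1) ^+ bdot x g * swap_amp g u v)^*) s.
  rewrite /walsh mulr_sumr; apply: eq_bigr => x _; rewrite mulrCA; congr (_ * _).
  rewrite /p1 mulr_sumr; apply: eq_bigr => u _; rewrite mulr_sumr; apply: eq_bigr => v _.
  by rewrite normCK hc_finalE rmorphM /= N_conj; ring.
rewrite walsh_hadamard_sqr swap_autocorr swap_overlapE -/N.
by field; apply: N_neq0.
Qed.

Lemma swap_overlap_trivial s : s = bzero n \/ s = bone n ->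
  swap_overlap s = (\sum_x `|psi x| ^+ 2) ^+ 2.
Proof.
move=> s01; under [in RHS]eq_bigr do rewrite normCK.
rewrite expr2 mulr_suml; apply: eq_bigr => u _; rewrite mulr_sumr; apply: eq_bigr => v _.
by rewrite /swap_amp swap_sub0; case: s01 => ->;
  rewrite ?swap_sub0 ?swap_sub1 /= rmorphM; ring.
Qed.

End Purity.

Theorem mainTheorem5 (C : numClosedFieldType) (n : nat) (psi : {ffun bits n -> C}) :
  is_pure_state psi ->
  ([/\ bzero n \in Hgroup psi, bone n \in Hgroup psi &
      forall s t, s \in Hgroup psi -> t \in Hgroup psi -> bxor s t \in Hgroup psi])
  /\
  (forall s : bits n,
     (s \in Hgroup psi <-> (forall s' : bits n, purity psi (bxor s' s) = purity psi s'))
     /\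
     (s \in Hgroup psi <-> (forall x : bits n, 0 < p1 psi x -> bdot s x = false))).
Proof.
move=> pure.
have trivial_pure s : s = bzero n \/ s = bone n -> purity psi s = 1.
  by move=> s01; rewrite -swap_overlapE swap_overlap_trivial // pure expr1n.
have sum_p1 : \sum_x p1 psi x = 1 by rewrite -walsh0 -purity_walsh trivial_pure //; left.
have memH s : s \in Hgroup psi <-> purity psi s = 1 by rewrite inE; split=> /eqP.
have memH_orth s :
    s \in Hgroup psi <-> (forall x, 0 < p1 psi x -> bdot s x = false).
  by rewrite memH purity_walsh -sum_p1; apply: walsh_eq_sumP; apply: p1_ge0.
split; first split.
- by apply/memH/trivial_pure; left.
- by apply/memH/trivial_pure; right.
- move=> s t /memH_orth s_orth /memH_orth t_orth; apply/memH_orth => x px.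
  by rewrite bdot_xorl s_orth ?t_orth.
move=> s; split=> //; split=> [/memH_orth s_orth s' | shift_inv].
  by rewrite !purity_walsh walsh_xor_orth //; apply: p1_ge0.
by apply/memH; rewrite -[s]bxor0l shift_inv trivial_pure //; left.
Qed.
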